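(* Under the ICMHD equations, $$\frac{D^2(\rho^{-1}\mathbf{B})}{Dt^2}-\frac{d^2\mathbf{B}}{ds^2}=-\frac{d}{ds}\big(\rho^{-1}\nabla\varpi\big),$$ equivalently $\frac{D^2\mathbf{B}_\rho}{Dt^2}=\frac{d}{ds}\frac{D\mathbf{u}}{Dt}=\mathbf{B}_\rho\cdot\nabla\Big(-\rho^{-1}\nabla p+\mathbf{J}\times\mathbf{B}_\rho\Big)$.
   Context: ICMHD setting: smooth fields on a domain of $\mathbb{R}^3$: velocity $\mathbf{u}$, density $\rho>0$, specific entropy $\sigma$, pressure $p$, magnetic field $\mathbf{B}$ with $\operatorname{div}\mathbf{B}=0$, current $\mathbf{J}=\operatorname{curl}\mathbf{B}$, satisfying $$\rho\frac{D\mathbf{u}}{Dt}=-\nabla p+\mathbf{J}\times\mathbf{B},\quad \partial_t\mathbf{B}=\operatorname{curl}(\mathbf{u}\times\mathbf{B}),\quad \frac{D\sigma}{Dt}=0,\quad \frac{D\rho^{-1}}{Dt}=\rho^{-1}\operatorname{div}\mathbf{u},$$ with $\frac{D}{Dt}=\partial_t+\mathbf{u}\cdot\nabla$. Notation: $\mathbf{B}_\rho=\rho^{-1}\mathbf{B}$, $\frac{d}{ds}=\mathbf{B}_\rho\cdot\nabla$ (applied componentwise to vectors), $\varpi=p+\tfrac12|\mathbf{B}|^2$. *)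

(* R : realType, space-time points in 'rV[R]_4.
   Coordinate 0 is time t; coordinate (lift ord0 k), k : 'I_3, is x_k. *)
From mathcomp Require Import all_boot all_order all_algebra.
From mathcomp Require Import all_classical all_reals all_analysis.
Set Implicit Arguments. Unset Strict Implicit. Unset Printing Implicit Defensive.
Import Order.TTheory GRing.Theory Num.Theory.
Import numFieldNormedType.Exports.
Local Open Scope ring_scope.
Local Open Scope classical_set_scope.

Section ICMHD.
Variable R : realType.
Notation pt := 'rV[R]_4.

Definition pd (i : 'I_4) (f : pt -> R) : pt -> R :=
  fun q => derive f q (delta_mx 0 i).

Fixpoint iterd (s : seq 'I_4) (f : pt -> R) : pt -> R :=
  match s with [::] => f | i :: s' => pd i (iterd s' f) end.

Definition smooth_on (U : set pt) (f : pt -> R) : Prop :=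
  forall (s : seq 'I_4) (q : pt), U q ->
    {for q, continuous (iterd s f)} /\
    (forall i : 'I_4, derivable (iterd s f) q (delta_mx 0 i)).

Definition dt (f : pt -> R) : pt -> R := pd ord0 f.
Definition dx (k : 'I_3) (f : pt -> R) : pt -> R := pd (lift ord0 k) f.

Definition vfield := 'I_3 -> pt -> R.

Definition Dt (u : vfield) (f : pt -> R) : pt -> R :=
  fun q => dt f q + \sum_(k < 3) u k q * dx k f q.

Definition divg (v : vfield) : pt -> R := fun q => \sum_(k < 3) dx k (v k) q.

Definition cross (a b : vfield) : vfield :=
  fun i q => a (ordS i) q * b (ordS (ordS i)) q - a (ordS (ordS i)) q * b (ordS i) q.

Definition curl (v : vfield) : vfield :=
  fun i q => dx (ordS i) (v (ordS (ordS i))) q - dx (ordS (ordS i)) (v (ordS i)) q.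

Definition Brho (rho : pt -> R) (B : vfield) : vfield := fun i q => (rho q)^-1 * B i q.

Definition dds (rho : pt -> R) (B : vfield) (f : pt -> R) : pt -> R :=
  fun q => \sum_(k < 3) Brho rho B k q * dx k f q.

Definition varpi (p : pt -> R) (B : vfield) : pt -> R :=
  fun q => p q + (\sum_(k < 3) B k q ^+ 2) / 2.

End ICMHD.

From mathcomp Require Import all_boot all_order all_algebra.
From mathcomp Require Import all_classical all_reals all_analysis.
From mathcomp Require Import ring.
Set Implicit Arguments. Unset Strict Implicit. Unset Printing Implicit Defensive.
Import Order.TTheory GRing.Theory Num.Theory.
Import numFieldNormedType.Exports.
Local Open Scope ring_scope.
Local Open Scope classical_set_scope.

(* The induction and continuity equations, together with div B = 0, give the
   Walen-type identity D B_rho/Dt = d u/ds.  For any vector field b, the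
   commutator of D/Dt with b . grad is (Db/Dt - b . grad u) . grad, because
   mixed partial derivatives of smooth functions commute; for b = B_rho it
   vanishes by the Walen identity, so D^2 B_rho/Dt^2 = d/ds (Du/Dt).  The
   momentum equation and (curl B) x B = B . grad B - grad |B|^2/2 then give
   the other two forms. *)

Section PartialDerivatives.
Variable R : realType.
Notation pt := 'rV[R]_4.
Implicit Types (f g : pt -> R) (q : pt).

Definition pderivable f q := forall i : 'I_4, derivable f q 'e_i.

Section Rules.
Variables (f g : pt -> R) (q : pt).
Hypotheses (df : pderivable f q) (dg : pderivable g q).

Lemma pderivableD : pderivable (fun x => f x + g x) q.
Proof. by move=> i; apply: derivableD. Qed.

Lemma pderivableM : pderivable (fun x => f x * g x) q.
Proof. by move=> i; apply: derivableM. Qed.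

Lemma pderivableV : f q != 0 -> pderivable (fun x => (f x)^-1) q.
Proof. by move=> fq0 i; apply: derivableV. Qed.

Lemma pdD i : pd i (fun x => f x + g x) q = pd i f q + pd i g q.
Proof. exact: deriveD. Qed.

Lemma pdB i : pd i (fun x => f x - g x) q = pd i f q - pd i g q.
Proof. exact: deriveB. Qed.

Lemma pdM i : pd i (fun x => f x * g x) q = pd i f q * g q + f q * pd i g q.
Proof. by rewrite /pd deriveM // addrC mulrC. Qed.

End Rules.

Lemma pderivable_cst (c : R) q : pderivable (fun=> c) q.
Proof. by move=> i; apply: derivable_cst. Qed.

Lemma pd_cst (c : R) i q : pd i (fun=> c) q = 0.
Proof. exact: derive_cst. Qed.

Lemma pderivable_sum n (F : 'I_n -> pt -> R) q :
  (forall k, pderivable (F k) q) -> pderivable (fun x => \sum_(k < n) F k x) q.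
Proof. by move=> dF i; rewrite -fct_sumE; apply: derivable_sum => k; apply: dF. Qed.

Lemma pd_sum n (F : 'I_n -> pt -> R) i q : (forall k, pderivable (F k) q) ->
  pd i (fun x => \sum_(k < n) F k x) q = \sum_(k < n) pd i (F k) q.
Proof. by move=> dF; rewrite /pd -fct_sumE derive_sum // => k; apply: dF. Qed.

Lemma pd_eq_on (U : set pt) f g i q : open U -> (forall x, U x -> f x = g x) -> U q ->
  pd i f q = pd i g q.
Proof. by move=> oU fg Uq; apply: near_eq_derive; apply: filterS fg _; apply: oU. Qed.

End PartialDerivatives.

Lemma smooth_pderivable (R : realType) (U : set 'rV[R]_4) f s q :
  smooth_on U f -> U q -> pderivable (iterd s f) q.
Proof. by move=> sf Uq; have [] := sf s q Uq. Qed.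
Arguments smooth_pderivable {R U f} s {q}.

Section SymmetryOfSecondDerivatives.
Variable R : realType.
Notation pt := 'rV[R]_4.
Implicit Types (f : pt -> R) (q : pt).

Lemma is_derive_line f x v s0 : derivable f (x + s0 *: v) v ->
  is_derive s0 1 (fun s => f (x + s *: v)) ('D_v f (x + s0 *: v)).
Proof.
move=> fv.
have E : (fun h : R => h^-1 *: (((fun s => f (x + s *: v)) \o shift s0) (h *: 1) - f (x + s0 *: v)))
  = (fun h => h^-1 *: ((f \o shift (x + s0 *: v)) (h *: v) - f (x + s0 *: v))).
  apply: funext => h /=; congr (_ *: (f _ - _)).
  by rewrite [h *: 1]mulr1 scalerDl addrCA addrA.
by apply: DeriveDef; rewrite /derivable /derive E.
Qed.

Lemma MVT_closed (phi dphi : R -> R) (t : R) : 0 < t ->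
  (forall s : R, 0 <= s <= t -> is_derive s 1 phi (dphi s)) ->
  exists2 s, 0 < s < t & phi t - phi 0 = dphi s * t.
Proof.
move=> t0 dphiP.
have [||s] := @MVT R phi dphi 0 t t0.
- by move=> s; rewrite in_itv /= => /andP[s0 st]; apply: dphiP; rewrite !ltW.
- apply: derivable_within_continuous => s; rewrite in_itv /= => sI.
  by have [] := dphiP s sI.
- by rewrite in_itv /= subr0; exists s.
Qed.

Lemma second_difference f q a b (t : R) : 0 < t ->
  (forall s r, 0 <= s <= t -> 0 <= r <= t ->
     derivable f (q + s *: a + r *: b) a /\ derivable ('D_a f) (q + s *: a + r *: b) b) ->
  exists s r, [/\ 0 < s < t, 0 < r < t &
    f (q + t *: a + t *: b) - f (q + t *: a) - f (q + t *: b) + f q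
      = 'D_b ('D_a f) (q + s *: a + r *: b) * t ^+ 2].
Proof.
move=> t0 fab.
have t_in : 0 <= t <= t by rewrite lexx ltW.
have zero_in : (0 : R) <= 0 <= t by rewrite lexx ltW.
have [s sI Es] : exists2 s, 0 < s < t &
    f (q + t *: b + t *: a) - f (q + t *: a) - (f (q + t *: b) - f q)
    = ('D_a f (q + t *: b + s *: a) - 'D_a f (q + s *: a)) * t.
  have := MVT_closed (phi := fun s => f (q + t *: b + s *: a) - f (q + s *: a)) t0.
  rewrite !scale0r !addr0; apply => s sI; apply: is_deriveB; apply: is_derive_line.
    by rewrite addrAC; have [] := fab s t sI t_in.
  by have [] := fab s 0 sI zero_in; rewrite scale0r addr0.
have sI' : 0 <= s <= t by case/andP: sI => *; rewrite !ltW.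
have [r rI Er] := MVT_closed (phi := fun r => 'D_a f (q + s *: a + r *: b)) t0
  (fun r rI => is_derive_line (proj2 (fab s r sI' rI))).
exists s, r; split => //.
move: Es Er; rewrite !scale0r !addr0 (addrAC q (t *: b) (s *: a)) (addrAC q (t *: b) (t *: a)).
move=> Es Er; rewrite Er in Es; rewrite expr2 mulrA -Es; ring.
Qed.

Lemma near_square (P : pt -> Prop) q a b : (\forall x \near q, P x) ->
  exists2 t : R, 0 < t & forall s r, 0 <= s <= t -> 0 <= r <= t -> P (q + s *: a + r *: b).
Proof.
move/nbhs_normP => [e e0 Pe].
have c0 : 0 < `|a| + `|b| + 1 by rewrite ltr_wpDl // addr_ge0.
exists (e / (`|a| + `|b| + 1)); first by rewrite divr_gt0.
move=> s r /andP[s0 st] /andP[r0 rt]; apply: Pe => /=.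
rewrite -addrA opprD addrA subrr add0r normrN.
apply: (le_lt_trans (ler_normD _ _)); rewrite !normrZ !ger0_norm //.
apply: (@le_lt_trans _ _ (e / (`|a| + `|b| + 1) * (`|a| + `|b|))).
  by rewrite mulrDr lerD // ler_wpM2r.
by rewrite mulrAC ltr_pdivrMr // ltr_pM2l // ltrDl.
Qed.

(* Both mixed partials, taken at nearby points, equal the same second
   difference divided by t^2; their continuity at q forces equality. *)
Lemma smooth_pdC (U : set pt) f i j q : open U -> smooth_on U f -> U q ->
  pd i (pd j f) q = pd j (pd i f) q.
Proof.
move=> oU sf Uq.
set g1 := pd i (pd j f); set g2 := pd j (pd i f).
apply/eqP/negPn/negP => g12.
set e := `|g1 q - g2 q| / 2.
have e0 : 0 < e by rewrite divr_gt0 // normr_gt0 subr_eq0.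
have near_q : \forall x \near q, [/\ U x, `|g1 q - g1 x| < e & `|g2 q - g2 x| < e].
  have g1c : {for q, continuous g1} by have [] := sf [:: i; j] q Uq.
  have g2c : {for q, continuous g2} by have [] := sf [:: j; i] q Uq.
  move/cvgrPdist_lt: g1c => g1c; move/cvgrPdist_lt: g2c => g2c.
  apply: filterS3 (oU q Uq) (g1c e e0) (g2c e e0) => x Ux g1x g2x.
  exact: (And3 Ux g1x g2x).
have [t t0 square] := near_square 'e_i 'e_j near_q.
have U_square s r : 0 <= s <= t -> 0 <= r <= t ->
    U (q + s *: 'e_i + r *: 'e_j) /\ U (q + s *: 'e_j + r *: 'e_i).
  move=> sI rI; rewrite [X in _ /\ U X]addrAC.
  by split; [case: (square s r sI rI) | case: (square r s rI sI)].
have [s1 [r1 [s1I r1I E1]]] := second_difference (a := 'e_j) (b := 'e_i) t0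
  (fun s r sI rI => let Ux := proj2 (U_square s r sI rI) in
     conj (smooth_pderivable [::] sf Ux j) (smooth_pderivable [:: j] sf Ux i)).
have [s2 [r2 [s2I r2I E2]]] := second_difference (a := 'e_i) (b := 'e_j) t0
  (fun s r sI rI => let Ux := proj1 (U_square s r sI rI) in
     conj (smooth_pderivable [::] sf Ux i) (smooth_pderivable [:: i] sf Ux j)).
have t20 : t ^+ 2 != 0 by rewrite expf_neq0 // gt_eqF.
have g12_square : g1 (q + r1 *: 'e_i + s1 *: 'e_j) = g2 (q + s2 *: 'e_i + r2 *: 'e_j).
  apply: (mulIf t20); rewrite (addrAC q (r1 *: _)) -[LHS]E1 -[RHS]E2.
  rewrite (addrAC q (t *: 'e_j)); ring.
have ltW_in x : 0 < x < t -> 0 <= x <= t by case/andP => *; rewrite !ltW.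
have [_ g1e _] := square r1 s1 (ltW_in _ r1I) (ltW_in _ s1I).
have [_ _ g2e] := square s2 r2 (ltW_in _ s2I) (ltW_in _ r2I).
rewrite g12_square in g1e.
have : `|g1 q - g2 q| < e + e.
  set P2 := q + s2 *: _ + _ in g1e g2e *.
  have -> : g1 q - g2 q = (g1 q - g2 P2) - (g2 q - g2 P2) by rewrite opprB addrA subrK.
  exact: le_lt_trans (ler_normB _ _) (ltrD g1e g2e).
by rewrite -splitr ltxx.
Qed.

End SymmetryOfSecondDerivatives.

(* Only goals [pderivable _ _] are attempted: closing the surrounding
   equations by conversion could unfold [derive] indefinitely. *)
Ltac pderivable_tac :=
  lazymatch goal with |- pderivable _ _ => solve [repeat match goal with
  | |- pderivable (fun x => @?f x + @?g x) _ => apply: pderivableD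
  | |- pderivable (fun x => @?f x * @?g x) _ => apply: pderivableM
  | |- pderivable (fun x => \sum_(k < _) @?F k x) _ => apply: pderivable_sum => ?
  | |- pderivable (fun _ => ?c) _ => apply: pderivable_cst
  | |- pderivable (fun x => (@?f x)^-1) _ => apply: pderivableV; last apply: lt0r_neq0
  | |- pderivable (fun x => ?f x) _ => change (pderivable f _)
  | |- pderivable (Brho _ _ _) _ => rewrite /Brho
  | |- pderivable (Dt _ _) _ => rewrite /Dt
  | |- pderivable (dds _ _ _) _ => rewrite /dds
  | |- pderivable (dt _) _ => rewrite /dt
  | |- pderivable (dx _ _) _ => rewrite /dx
  | H : pderivable ?f ?q |- pderivable ?f ?q => exact: H
  | H : forall k, pderivable (?F k) ?q |- pderivable (?F _) ?q => exact: H
  | sf : smooth_on ?U ?f, Uq : ?U ?q |- pderivable ?f ?q =>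
      exact: (smooth_pderivable [::] sf Uq)
  | sf : smooth_on ?U ?f, Uq : ?U ?q |- pderivable (pd _ ?f) ?q =>
      exact: (smooth_pderivable [:: _] sf Uq)
  | sf : forall k, smooth_on ?U (?f k), Uq : ?U ?q |- pderivable (?f _) ?q =>
      exact: (smooth_pderivable [::] (sf _) Uq)
  | sf : forall k, smooth_on ?U (?f k), Uq : ?U ?q |- pderivable (pd _ (?f _)) ?q =>
      exact: (smooth_pderivable [:: _] (sf _) Uq)
  | H : forall x, ?U x -> _, Uq : ?U ?q |- is_true _ => exact: H _ Uq
  end] end.

Lemma ordS3 (i : 'I_3) : ordS (ordS (ordS i)) = i.
Proof. by apply/val_inj; case: i => [[|[|[|]]]]. Qed.

Lemma sum3_rot (V : nmodType) (i : 'I_3) (F : 'I_3 -> V) :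
  \sum_(k < 3) F k = F i + F (ordS i) + F (ordS (ordS i)).
Proof.
rewrite !big_ord_recl big_ord0 addr0 addrA.
case: i => [[|[|[|//]]] Hi].
- by congr (F _ + F _ + F _); apply/val_inj.
- by rewrite -addrA addrC; congr (F _ + F _ + F _); apply/val_inj.
- by rewrite addrC addrA; congr (F _ + F _ + F _); apply/val_inj.
Qed.

Section VectorCalculus.
Variable R : realType.
Notation pt := 'rV[R]_4.
Implicit Types (f g : pt -> R) (q : pt) (a b : vfield R).

Definition advect b f : pt -> R := fun q => \sum_(k < 3) b k q * dx k f q.

Lemma advectB b f g q : pderivable f q -> pderivable g q ->
  advect b (fun x => f x - g x) q = advect b f q - advect b g q.
Proof.
move=> df dg; rewrite /advect -sumrB; apply: eq_bigr => k _.
by rewrite /dx pdB // mulrBr.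
Qed.

Lemma advect_eq_on (U : set pt) b f g q : open U -> (forall x, U x -> f x = g x) -> U q ->
  advect b f q = advect b g q.
Proof. by move=> oU fg Uq; apply: eq_bigr => k _; rewrite /dx (pd_eq_on _ oU fg Uq). Qed.

Lemma ddsE (rho : pt -> R) b : dds rho b = advect (Brho rho b).
Proof. by []. Qed.

Lemma dds_advect (rho : pt -> R) b f q : dds rho b f q = (rho q)^-1 * advect b f q.
Proof. by rewrite /dds /advect mulr_sumr; apply: eq_bigr => k _; rewrite /Brho mulrA. Qed.

Lemma cross_Brho (rho : pt -> R) a b i q :
  cross a (Brho rho b) i q = (rho q)^-1 * cross a b i q.
Proof. by rewrite /cross /Brho; ring. Qed.

Lemma curl_cross a b i q : (forall k, pderivable (a k) q) -> (forall k, pderivable (b k) q) ->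
  curl (cross a b) i q
    = advect b (a i) q - b i q * divg a q + a i q * divg b q - advect a (b i) q.
Proof.
move=> da db; rewrite /curl /cross !ordS3 /dx.
rewrite !pdB; try pderivable_tac.
rewrite !pdM; try pderivable_tac.
rewrite /advect /divg /dx !(sum3_rot i); ring.
Qed.

Lemma cross_curl b i q :
  cross (curl b) b i q = advect b (b i) q - \sum_(k < 3) b k q * dx i (b k) q.
Proof. by rewrite /cross /curl !ordS3 /advect !(sum3_rot i); ring. Qed.

Lemma dx_varpi (p : pt -> R) b i q : pderivable p q -> (forall k, pderivable (b k) q) ->
  dx i (varpi p b) q = dx i p q + \sum_(k < 3) b k q * dx i (b k) q.
Proof.
move=> dp db.
have -> : varpi p b = fun x => p x + (\sum_(k < 3) b k x * b k x) * 2^-1.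
  by apply/funext => x; rewrite /varpi; under eq_bigr do rewrite expr2.
rewrite /dx pdD; try pderivable_tac.
rewrite pdM; try pderivable_tac.
rewrite pd_cst mulr0 addr0 pd_sum; last by move=> k; pderivable_tac.
rewrite (eq_bigr (fun k => 2 * (b k q * pd (lift ord0 i) (b k) q))); last first.
  by move=> k _; rewrite pdM; [ring | pderivable_tac | pderivable_tac].
by rewrite -mulr_sumr mulrC mulKf // pnatr_eq0.
Qed.

Variable u : vfield R.

Lemma DtE f q : Dt u f q = dt f q + advect u f q.
Proof. by []. Qed.

Lemma DtM f g q : pderivable f q -> pderivable g q ->
  Dt u (fun x => f x * g x) q = Dt u f q * g q + f q * Dt u g q.
Proof.
move=> df dg; rewrite !DtE /dt pdM // /advect.
under eq_bigr => k _ do rewrite /dx pdM //.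
have -> : \sum_(k < 3) u k q * (pd (lift ord0 k) f q * g q + f q * pd (lift ord0 k) g q)
    = (\sum_(k < 3) u k q * dx k f q) * g q + f q * \sum_(k < 3) u k q * dx k g q.
  by rewrite mulr_suml mulr_sumr -big_split; apply: eq_bigr => k _ /=; rewrite /dx; ring.
ring.
Qed.

Lemma Dt_sum n (F : 'I_n -> pt -> R) q : (forall k, pderivable (F k) q) ->
  Dt u (fun x => \sum_(k < n) F k x) q = \sum_(k < n) Dt u (F k) q.
Proof.
move=> dF; rewrite DtE /dt pd_sum // /advect /dx.
under [X in _ + X]eq_bigr => k _ do rewrite pd_sum // mulr_sumr.
by rewrite exchange_big -big_split.
Qed.

Lemma Dt_eq_on (U : set pt) f g q : open U -> (forall x, U x -> f x = g x) -> U q ->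
  Dt u f q = Dt u g q.
Proof.
by move=> oU fg Uq; rewrite !DtE /dt (pd_eq_on _ oU fg Uq) (advect_eq_on _ oU fg Uq).
Qed.

Lemma dx_Dt (U : set pt) k f q : open U -> smooth_on U f -> U q ->
  (forall j, pderivable (u j) q) ->
  dx k (Dt u f) q = Dt u (dx k f) q + \sum_(j < 3) dx k (u j) q * dx j f q.
Proof.
move=> oU sf Uq du.
rewrite {1}/Dt /dx pdD; try pderivable_tac.
rewrite pd_sum; last by move=> j; pderivable_tac.
rewrite (eq_bigr (fun j => pd (lift ord0 k) (u j) q * pd (lift ord0 j) f q
                          + u j q * pd (lift ord0 j) (pd (lift ord0 k) f) q)); last first.
  move=> j _; rewrite pdM; try pderivable_tac.
  by rewrite (smooth_pdC _ _ oU sf Uq).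
rewrite big_split /= DtE /dt /advect /dx (smooth_pdC _ _ oU sf Uq); ring.
Qed.

Lemma Dt_advect (U : set pt) b f q : open U -> smooth_on U f -> U q ->
  (forall j, pderivable (u j) q) -> (forall k, pderivable (b k) q) ->
  Dt u (advect b f) q
    = advect b (Dt u f) q + \sum_(k < 3) (Dt u (b k) q - advect b (u k) q) * dx k f q.
Proof.
move=> oU sf Uq du db.
have exchange : \sum_(k < 3) b k q * \sum_(j < 3) dx k (u j) q * dx j f q
              = \sum_(k < 3) advect b (u k) q * dx k f q.
  under eq_bigr do rewrite mulr_sumr.
  rewrite exchange_big; apply: eq_bigr => k _; rewrite /advect mulr_suml.
  by apply: eq_bigr => j _; rewrite mulrA.
have advect_Dt : advect b (Dt u f) q
    = \sum_(k < 3) b k q * Dt u (dx k f) q + \sum_(k < 3) advect b (u k) q * dx k f q.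
  rewrite {1}/advect -exchange -big_split; apply: eq_bigr => k _.
  by rewrite (dx_Dt _ oU sf Uq du) mulrDr.
have split_sum : \sum_(k < 3) (Dt u (b k) q - advect b (u k) q) * dx k f q
    = \sum_(k < 3) Dt u (b k) q * dx k f q - \sum_(k < 3) advect b (u k) q * dx k f q.
  by rewrite -sumrB; apply: eq_bigr => k _; rewrite mulrBl.
rewrite {1}/advect Dt_sum; last by move=> k; pderivable_tac.
rewrite (eq_bigr (fun k => Dt u (b k) q * dx k f q + b k q * Dt u (dx k f) q)); last first.
  by move=> k _; rewrite DtM; try pderivable_tac.
rewrite advect_Dt split_sum big_split /=; ring.
Qed.

End VectorCalculus.

Section ICMHD.
Variable R : realType.
Notation pt := 'rV[R]_4.
Variables (U : set pt) (u B : vfield R) (rho p : pt -> R).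
Hypotheses (oU : open U) (su : forall k, smooth_on U (u k)) (sB : forall k, smooth_on U (B k))
  (srho : smooth_on U rho) (sp : smooth_on U p) (rho_gt0 : forall x, U x -> 0 < rho x).
Hypothesis divB0 : forall x, U x -> divg B x = 0.
Hypothesis momentum :
  forall i x, U x -> rho x * Dt u (u i) x = - dx i p x + cross (curl B) B i x.
Hypothesis induction : forall i x, U x -> dt (B i) x = curl (cross u B) i x.
Hypothesis continuity :
  forall x, U x -> Dt u (fun y => (rho y)^-1) x = (rho x)^-1 * divg u x.

Lemma Dt_Brho i q : U q -> Dt u (Brho rho B i) q = dds rho B (u i) q.
Proof.
move=> Uq; rewrite /Brho DtM; try pderivable_tac.
rewrite (continuity Uq) DtE (induction i Uq) curl_cross; try (move=> k; pderivable_tac).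
by rewrite (divB0 Uq) dds_advect; ring.
Qed.

Lemma Dt2_Brho i q : U q -> Dt u (Dt u (Brho rho B i)) q = dds rho B (Dt u (u i)) q.
Proof.
move=> Uq; rewrite (Dt_eq_on u oU (fun x Ux => Dt_Brho i Ux) Uq) ddsE.
rewrite (Dt_advect oU (su i) Uq); try (move=> k; pderivable_tac).
rewrite (eq_bigr (fun=> 0)) => [|k _]; last by rewrite (Dt_Brho k Uq) ddsE subrr mul0r.
by rewrite big1_eq addr0.
Qed.

Lemma Dt_velocity i x : U x ->
  Dt u (u i) x = - ((rho x)^-1 * dx i p x) + cross (curl B) (Brho rho B) i x.
Proof.
move=> Ux; rewrite -[LHS](mulKf (lt0r_neq0 (rho_gt0 Ux))) (momentum i Ux) cross_Brho; ring.
Qed.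

Lemma rhoV_dx_varpi i x : U x ->
  (rho x)^-1 * dx i (varpi p B) x = dds rho B (B i) x - Dt u (u i) x.
Proof.
move=> Ux; rewrite dx_varpi; [|pderivable_tac | move=> k; pderivable_tac].
by rewrite (Dt_velocity i Ux) cross_Brho cross_curl dds_advect; ring.
Qed.

End ICMHD.

Theorem mainTheorem6 (R : realType) (U : set 'rV[R]_4)
  (u B : vfield R) (rho sigma p : 'rV[R]_4 -> R) :
  open U ->
  (forall i, smooth_on U (u i)) -> (forall i, smooth_on U (B i)) ->
  smooth_on U rho -> smooth_on U sigma -> smooth_on U p ->
  (forall q, U q -> 0 < rho q) ->
  (forall q, U q -> divg B q = 0) ->
  (* momentum: rho Du/Dt = -grad p + J x B, J = curl B *)
  (forall i q, U q ->
     rho q * Dt u (u i) q = - dx i p q + cross (curl B) B i q) ->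
  (* induction: d_t B = curl (u x B) *)
  (forall i q, U q -> dt (B i) q = curl (cross u B) i q) ->
  (* entropy: D sigma/Dt = 0 *)
  (forall q, U q -> Dt u sigma q = 0) ->
  (* continuity: D rho^-1/Dt = rho^-1 div u *)
  (forall q, U q -> Dt u (fun x => (rho x)^-1) q = (rho q)^-1 * divg u q) ->
  forall i q, U q ->
    (Dt u (Dt u (Brho rho B i)) q - dds rho B (dds rho B (B i)) q
       = - dds rho B (fun x => (rho x)^-1 * dx i (varpi p B) x) q)
    /\
    (Dt u (Dt u (Brho rho B i)) q = dds rho B (Dt u (u i)) q
     /\ dds rho B (Dt u (u i)) q
        = dds rho B (fun x => - ((rho x)^-1 * dx i p x)
                              + cross (curl B) (Brho rho B) i x) q).
Proof.
move=> oU su sB srho _ sp rho_gt0 divB0 momentum induction _ continuity i q Uq.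
have Dt2 := Dt2_Brho oU su sB srho rho_gt0 divB0 induction continuity i Uq.
have varpi_on := rhoV_dx_varpi sB sp rho_gt0 momentum i.
split; [|split].
- rewrite Dt2 ddsE (advect_eq_on _ oU varpi_on Uq) advectB; try pderivable_tac.
  by rewrite opprB.
- exact: Dt2.
- exact: advect_eq_on _ oU (Dt_velocity rho_gt0 momentum i) Uq.
Qed.
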